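(* Let $n\geq 1$ be an integer and let $a,b,x\in\mathbb{C}$. Then $$\sum_{k=0}^{n-1}\frac{1}{n}\binom{n}{k}\binom{n}{k+1}x^{2k}b^{n-1-k}=\sum_{k=0}^{n-1}\binom{n-1}{k}M_k^{(a,b)}x^k(x^2-ax+b)^{n-1-k},$$ where $M_k^{(a,b)}$ denotes the $(a,b)$-Motzkin number defined in the context.
   Context: Let $C_k=\frac{1}{k+1}\binom{2k}{k}$ be the Catalan numbers. For an integer $m\geq 0$ and $a,b\in\mathbb{C}$, the $(a,b)$-Motzkin number is $$M_m^{(a,b)}=\sum_{k=0}^{\lfloor m/2\rfloor}\binom{m}{2k}C_k a^{m-2k}b^k .$$ (Equivalently, it is the total weight of Motzkin paths from $(0,0)$ to $(m,m)$ with steps $(0,2),(2,0),(1,1)$ never going below $y=x$, where each $(1,1)$ step has weight $a$, each $(2,0)$ step has weight $b$, and a path's weight is the product of its step weights.) In particular $M_0^{(a,b)}=1$. *)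

From mathcomp Require Import all_boot all_order all_algebra.
Set Implicit Arguments. Unset Strict Implicit. Unset Printing Implicit Defensive.
Import Order.TTheory GRing.Theory Num.Theory.
Local Open Scope ring_scope.

Definition catalan (k : nat) : nat := 'C(k.*2, k) %/ k.+1.

Definition motzkin {R : comRingType} (a b : R) (m : nat) : R :=
  \sum_(0 <= k < m./2.+1) ('C(m, k.*2) * catalan k)%:R * a ^+ (m - k.*2) * b ^+ k.

From mathcomp Require Import all_boot all_order all_algebra.
From mathcomp Require Import ring zify.
Import Order.TTheory GRing.Theory Num.Theory.

Set Implicit Arguments.
Unset Strict Implicit.
Unset Printing Implicit Defensive.

(* Writing m = n - 1, both sides equal
     sum_j C(m, 2j) C_j (b x^2)^j (x^2 + b)^(m - 2j).
   On the right, expand M_k, exchange the two sums and recombine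
   (x^2 - a x + b) + a x by the binomial theorem.  On the left, a Vandermonde
   computation gives the Narayana number (1/n) C(n,k) C(n,k+1) as
   sum_j C_j C(m, k+j) C(k+j, 2j); after exchanging the sums the binomial
   theorem collapses the inner sum into (x^2 + b)^(m - 2j). *)

Lemma mul_bin_sub n a b : b <= a -> 'C(n, a) * 'C(a, b) = 'C(n, b) * 'C(n - b, a - b).
Proof.
move=> le_ba; have [le_an | lt_na] := leqP a n; last first.
  rewrite bin_small //; have [le_bn | lt_nb] := leqP b n.
    by rewrite (@bin_small (n - b)) ?muln0 //; lia.
  by rewrite (@bin_small n b).
apply/eqP; rewrite -(eqn_pmul2r (_ : 0 < b`! * (a - b)`! * (n - a)`!)); last first.
  by rewrite !muln_gt0 !fact_gt0.
have fact_a := bin_fact le_ba; have fact_na := bin_fact le_an.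
have fact_nb := bin_fact (leq_trans le_ba le_an).
have fact_nba := bin_fact (leq_sub2r b le_an).
rewrite (_ : n - b - (a - b) = n - a) in fact_nba; last by lia.
apply/eqP; transitivity ('C(n, a) * ('C(a, b) * (b`! * (a - b)`!)) * (n - a)`!).
  by ring.
by rewrite fact_a -mulnA fact_na -fact_nb -fact_nba; ring.
Qed.

Lemma catalan_mulS j : catalan j * j.+1 = 'C(j.*2, j).
Proof.
have bin_eq : j.+1 * 'C(j.*2, j.+1) = j * 'C(j.*2, j).
  by rewrite mul_bin_left; congr (_ * _); lia.
rewrite /catalan (_ : 'C(j.*2, j) = ('C(j.*2, j) - 'C(j.*2, j.+1)) * j.+1) ?mulnK //.
nia.
Qed.

Lemma mul_bin_catalan m k j :
  'C(m, k) * 'C(k, j) * 'C(m - k, j) = j.+1 * catalan j * 'C(m, k + j) * 'C(k + j, j.*2).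
Proof.
have trinomial : 'C(m, k) * 'C(m - k, j) = 'C(m, k + j) * 'C(k + j, j).
  by rewrite -(bin_sub (leq_addl k j)) addnK mul_bin_sub ?leq_addr // addKn.
rewrite (mulnC j.+1) catalan_mulS mulnAC trinomial -mulnA.
have := @mul_bin_sub (k + j) j.*2 j; rewrite -addnn !addnK => <-; last exact: leq_addl.
by rewrite addnn; ring.
Qed.

Lemma vandermonde_shift k l N : k < N ->
  \sum_(0 <= j < N) 'C(k, j) * 'C(l, j.+1) = 'C(l + k, k.+1).
Proof.
move=> lt_kN; rewrite -binomial.Vandermonde big_ord_recl subn0.
rewrite (@bin_small k k.+1) // muln0 add0n.
rewrite (big_cat_nat (leq0n k.+1) lt_kN) /= [X in _ + X]big1_seq ?addn0; last first.
  by move=> j; rewrite mem_index_iota => /andP[_ /andP[lt_kj _]]; rewrite bin_small.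
rewrite big_mkord; apply: eq_bigr => j _ /=.
by rewrite mulnC subSS bin_sub // -ltnS.
Qed.

Lemma narayana_catalan m k : k <= m ->
  'C(m.+1, k) * 'C(m.+1, k.+1)
  = m.+1 * \sum_(0 <= j < m.+1) catalan j * 'C(m, k + j) * 'C(k + j, j.*2).
Proof.
move=> le_km; have pos_mk : 0 < m.+1 - k by lia.
(* Scaled by m+1-k, the j-th summand becomes C(m,k) C(k,j) C(m+1-k, j+1), whose
   sum over j is C(m,k) C(m+1, k+1) by Vandermonde. *)
have scaled_summand j : (m.+1 - k) * (catalan j * 'C(m, k + j) * 'C(k + j, j.*2))
              = 'C(m, k) * 'C(k, j) * 'C(m.+1 - k, j.+1).
  have diag : (m.+1 - k) * 'C(m - k, j) = j.+1 * 'C(m.+1 - k, j.+1).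
    by rewrite -mul_bin_diag; congr (_ * 'C(_, _)); lia.
  apply/eqP; rewrite -(eqn_pmul2l (ltn0Sn j)); apply/eqP.
  transitivity ((m.+1 - k) * (j.+1 * catalan j * 'C(m, k + j) * 'C(k + j, j.*2))).
    by ring.
  rewrite -mul_bin_catalan.
  transitivity ('C(m, k) * 'C(k, j) * ((m.+1 - k) * 'C(m - k, j))); first by ring.
  by rewrite diag; ring.
apply/eqP; rewrite -(eqn_pmul2l pos_mk) mulnA -mul_bin_down /= mulnCA big_distrr /=.
under eq_bigr do rewrite scaled_summand -mulnA.
by rewrite -big_distrr vandermonde_shift // subnK ?mulnA // ltnW.
Qed.

Section BigNatSupport.

Variables (R : Type) (idx : R) (op : Monoid.law idx).

Lemma big_nat_trunc n1 n2 F : n1 <= n2 -> (forall i, n1 <= i -> F i = idx) ->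
  \big[op/idx]_(0 <= i < n2) F i = \big[op/idx]_(0 <= i < n1) F i.
Proof.
move=> le_n12 F0; rewrite (big_cat_nat (leq0n n1) le_n12) /=.
rewrite [X in op _ X]big1_seq ?Monoid.mulm1 // => i.
by rewrite mem_index_iota => /andP[_ /andP[le_n1i _]]; exact: F0.
Qed.

Lemma big_nat_shift n j F : (forall i, i < j -> F i = idx) ->
  \big[op/idx]_(0 <= i < n + j) F i = \big[op/idx]_(0 <= i < n) F (i + j).
Proof.
move=> F0; rewrite (big_cat_nat (leq0n j) (leq_addl n j)) /= big1_seq => [|i].
  by rewrite Monoid.mul1m -{1}(add0n j) big_addn addnK.
by rewrite mem_index_iota => /andP[_ lt_ij]; exact: F0.
Qed.

End BigNatSupport.

Local Open Scope ring_scope.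

Lemma exprDn_shift (R : comPzSemiRingType) (u v : R) m i :
  'C(m, i)%:R * (u + v) ^+ (m - i)
  = \sum_(0 <= k < m.+1) ('C(m, k) * 'C(k, i))%:R * u ^+ (k - i) * v ^+ (m - k).
Proof.
have [le_im | lt_mi] := leqP i m; last first.
  rewrite bin_small // mul0r big1_seq // => k; rewrite mem_index_iota => /andP[_ lt_km].
  by rewrite (@bin_small k i) ?muln0 ?mul0r //; lia.
rewrite (_ : m.+1 = (m - i).+1 + i)%N; last by lia.
rewrite big_nat_shift => [|k lt_ki]; last by rewrite (@bin_small k i) ?muln0 ?mul0r.
rewrite addrC exprDn big_distrr big_mkord; apply: eq_bigr => k _ /=.
rewrite mul_bin_sub ?leq_addl // !addnK (_ : m - (k + i) = m - i - k)%N; last by lia.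
by rewrite natrM -mulr_natr; ring.
Qed.

Definition catalan_binomial_sum {R : comNzRingType} (b x : R) m :=
  \sum_(0 <= j < m.+1)
    ('C(m, j.*2) * catalan j)%:R * (b * x ^+ 2) ^+ j * (x ^+ 2 + b) ^+ (m - j.*2).

Lemma motzkin_widen (R : comNzRingType) (a b : R) k N : (k < N)%N ->
  motzkin a b k
  = \sum_(0 <= j < N) ('C(k, j.*2) * catalan j)%:R * a ^+ (k - j.*2) * b ^+ j.
Proof.
move=> lt_kN; rewrite /motzkin [RHS](@big_nat_trunc _ _ _ k./2.+1) => [//||j].
  by rewrite ltn_half_double; lia.
by rewrite ltn_half_double => lt_kj; rewrite bin_small // mul0n !mul0r.
Qed.

Lemma motzkin_column_sum (R : comNzRingType) (a b x : R) m j :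
  \sum_(0 <= k < m.+1) ('C(m, k) * 'C(k, j.*2))%:R * a ^+ (k - j.*2) * x ^+ k
                         * (x ^+ 2 - a * x + b) ^+ (m - k)
  = 'C(m, j.*2)%:R * x ^+ j.*2 * (x ^+ 2 + b) ^+ (m - j.*2).
Proof.
rewrite (_ : x ^+ 2 + b = a * x + (x ^+ 2 - a * x + b)); last by ring.
rewrite -mulrA mulrCA exprDn_shift big_distrr; apply: eq_bigr => k _ /=.
have [le_jk | lt_kj] := leqP j.*2 k; last first.
  by rewrite (@bin_small k j.*2) // muln0 !mul0r mulr0.
have -> : x ^+ k = x ^+ j.*2 * x ^+ (k - j.*2) by rewrite -exprD subnKC.
by rewrite exprMn; ring.
Qed.

Lemma narayana_column_sum (R : comNzRingType) (b x : R) m j :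
  \sum_(0 <= k < m.+1) ('C(m, k + j) * 'C(k + j, j.*2))%:R * x ^+ k.*2 * b ^+ (m - k)
  = 'C(m, j.*2)%:R * (b * x ^+ 2) ^+ j * (x ^+ 2 + b) ^+ (m - j.*2).
Proof.
pose G K : R :=
  ('C(m, K) * 'C(K, j.*2))%:R * (x ^+ 2) ^+ (K - j) * b ^+ (m + j - K).
have G0 K : (K < j.*2)%N || (m < K)%N -> G K = 0.
  by case/orP => small; rewrite /G (bin_small small) ?(muln0, mul0n) !mul0r.
transitivity (\sum_(0 <= K < m.+1) G K).
  rewrite -[RHS](big_nat_trunc _ (leq_addr j m.+1)) => [|K le_mK]; last first.
    by rewrite G0 ?le_mK ?orbT.
  rewrite big_nat_shift => [|K lt_Kj]; last by rewrite G0 //; apply/orP; left; lia.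
  apply: eq_bigr => k _; rewrite /G addnK (_ : m + j - (k + j) = m - k)%N; last by lia.
  by rewrite -exprM mul2n.
rewrite mulrAC exprDn_shift big_distrl /=; apply: eq_big_nat => K /andP[_ lt_Km].
have [le_jK | lt_Kj] := leqP j.*2 K; last first.
  by rewrite G0 ?lt_Kj // (@bin_small K j.*2) // muln0 !mul0r.
rewrite /G (_ : K - j = j + (K - j.*2))%N; last by lia.
rewrite (_ : m + j - K = j + (m - K))%N; last by lia.
by rewrite exprD [b ^+ (j + _)]exprD [(b * _) ^+ j]exprMn; ring.
Qed.

Lemma motzkin_binomial_sumE (R : comNzRingType) (a b x : R) m :
  \sum_(0 <= k < m.+1)
    'C(m, k)%:R * motzkin a b k * x ^+ k * (x ^+ 2 - a * x + b) ^+ (m - k)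
  = catalan_binomial_sum b x m.
Proof.
transitivity (\sum_(0 <= j < m.+1) \sum_(0 <= k < m.+1) (catalan j)%:R * b ^+ j *
   (('C(m, k) * 'C(k, j.*2))%:R * a ^+ (k - j.*2) * x ^+ k
     * (x ^+ 2 - a * x + b) ^+ (m - k))).
  rewrite [RHS]exchange_big_nat; apply: eq_big_nat => k /andP[_ lt_km].
  rewrite (motzkin_widen _ _ lt_km) big_distrr big_distrl big_distrl /=.
  by apply: eq_bigr => j _; rewrite !natrM; ring.
apply: eq_bigr => j _; rewrite -big_distrr motzkin_column_sum /=.
by rewrite [(b * _) ^+ j]exprMn -exprM mul2n natrM; ring.
Qed.

Lemma narayana_sumE (R : numFieldType) (b x : R) m :
  \sum_(0 <= k < m.+1)
    (m.+1%:R)^-1 * ('C(m.+1, k) * 'C(m.+1, k.+1))%:R * x ^+ k.*2 * b ^+ (m - k)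
  = catalan_binomial_sum b x m.
Proof.
transitivity (\sum_(0 <= j < m.+1) \sum_(0 <= k < m.+1) (catalan j)%:R *
   (('C(m, k + j) * 'C(k + j, j.*2))%:R * x ^+ k.*2 * b ^+ (m - k))).
  rewrite [RHS]exchange_big_nat; apply: eq_big_nat => k /andP[_ lt_km].
  rewrite narayana_catalan // natrM mulKf ?pnatr_eq0 // natr_sum !big_distrl /=.
  by apply: eq_bigr => j _; rewrite !natrM; ring.
apply: eq_bigr => j _; rewrite -big_distrr narayana_column_sum /=.
by rewrite natrM; ring.
Qed.

Theorem theorem1p1 (C : numClosedFieldType) (n : nat) (a b x : C) :
  (1 <= n)%N ->
  \sum_(0 <= k < n) (n%:R)^-1 * ('C(n, k) * 'C(n, k.+1))%:R * x ^+ (k.*2) * b ^+ (n.-1 - k)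
  = \sum_(0 <= k < n) 'C(n.-1, k)%:R * motzkin a b k * x ^+ k
      * (x ^+ 2 - a * x + b) ^+ (n.-1 - k).
Proof.
by case: n => [//|m] _; rewrite narayana_sumE motzkin_binomial_sumE.
Qed.
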